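(* Let $\mathfrak{H}$ be a hereditary homomorph of finite groups and $\mathfrak{F}=v^*\mathfrak{H}$. Let $p\neq q$ be primes and $k\ge 1$. If $E(q^k|p)\in\mathfrak{F}$, then $E(q^t|p)\in\mathfrak{F}$ for all $0\le t\le k$.
   Context: All groups are finite. A homomorph is a class closed under epimorphic images; hereditary means closed under subgroups. A subgroup $H$ of $G$ is $K$-$\mathfrak{H}$-subnormal if there is a chain $H=H_0\le\dots\le H_n=G$ with, for each $i$, $H_{i-1}\trianglelefteq H_i$ or $H_i/\mathrm{Core}_{H_i}(H_{i-1})\in\mathfrak{H}$; $v^*\mathfrak{H}$ is the class of groups all of whose cyclic subgroups of prime power order are $K$-$\mathfrak{H}$-subnormal. For a prime $p$ and a natural number $n$, $E(n|p)$ denotes the (unique up to isomorphism) group $G$ having an abelian normal subgroup $A$ of exponent $p$ with a complement $C\cong Z_n$ acting faithfully and indecomposably on $A$ (so $E(1|p)\cong Z_p$). *)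

From HB Require Import structures.
From mathcomp Require Import all_boot all_fingroup all_solvable.
Set Implicit Arguments. Unset Strict Implicit. Unset Printing Implicit Defensive.
Local Open Scope group_scope.

Definition group_class := forall gT : finGroupType, {group gT} -> Prop.

(* Homomorph: closed under epimorphic images (this includes isomorphic copies). *)
Definition homomorph (hH : group_class) : Prop :=
  forall (gT rT : finGroupType) (G : {group gT}) (f : {morphism G >-> rT}),
    hH gT G -> hH rT (f @* G)%G.

Definition hereditary (hH : group_class) : Prop :=
  forall (gT : finGroupType) (G K : {group gT}),
    hH gT G -> K \subset G -> hH gT K.

(* K-H-subnormality: a chain H = H_0 <= H_1 <= ... <= H_n = G where each step
   H_{i-1} <= H_i satisfies H_{i-1} <| H_i or H_i / Core_{H_i}(H_{i-1}) \in hH.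
   Core_{H_i}(H_{i-1}) is mathcomp's gcore. *)
Inductive KHsubnormal (hH : group_class) (gT : finGroupType) (G : {group gT})
  : {group gT} -> Prop :=
| KHsn_refl : KHsubnormal hH G G
| KHsn_step (H K : {group gT}) :
    H \subset K ->
    (H <| K \/ hH _ (K / gcore H K)%G) ->
    KHsubnormal hH G K -> KHsubnormal hH G H.

Definition vstar (hH : group_class) : group_class :=
  fun gT G => forall (p : nat) (x : gT), prime p -> x \in G -> p.-elt x ->
    KHsubnormal hH G <[x]>%G.

(* G is (isomorphic to) E(n|p): G = A ><| C with A an abelian normal subgroup
   of exponent p, C cyclic of order n acting faithfully on A, and A
   indecomposable as a C-module (A nontrivial and not the direct product of
   two nontrivial C-invariant subgroups). *)
Definition is_E (gT : finGroupType) (G : {group gT}) (n p : nat) : Prop :=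
  exists A C : {group gT},
    [/\ A ><| C = G, A <| G, abelian A & exponent A = p] /\
    [/\ cyclic C, #|C| = n, 'C_C(A) = 1, A :!=: 1 &
        (forall B1 B2 : {group gT}, B1 \x B2 = A ->
           C \subset 'N(B1) -> C \subset 'N(B2) -> B1 :==: 1 \/ B2 :==: 1)].

Arguments vstar hH gT G : clear implicits.

From mathcomp Require Import all_boot all_fingroup all_solvable.
Set Implicit Arguments. Unset Strict Implicit. Unset Printing Implicit Defensive.
Local Open Scope group_scope.

(* For t > 0 the group E(q^t|p) = A ><| <[z]> is itself in hH, so all its subgroups are
   K-hH-subnormal.  To see this, induce A up to a cyclic group of order q^k: on the base group
   A^m (m = q^(k-t)) the twisted cyclic shift tau has order q^k and tau^m acts as z on every
   coordinate.  If W is a minimal tau-invariant subgroup of A^m then W ><| <[tau]> is an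
   E(q^k|p), so <[tau]> is K-hH-subnormal in it; being maximal, non-normal and core-free,
   this forces W ><| <[tau]> into hH.  Its subgroup W <[tau^m]> maps onto A ><| <[z]> by a
   coordinate projection, because that projection maps W onto a nontrivial z-invariant, hence
   full, subgroup of the irreducible module A. *)

Section ClassClosure.

Variable hH : group_class.
Hypothesis hom : homomorph hH.

Lemma homomorph_morphim (gT rT : finGroupType) (D G : {group gT})
    (f : {morphism D >-> rT}) :
  hH G -> G \subset D -> hH (f @* G)%G.
Proof.
move=> hG sGD; have := hom (restrm sGD f) hG.
suff -> : (restrm sGD f @* G)%G = (f @* G)%G by [].
by apply: val_inj; rewrite /= morphim_restrm setIid.
Qed.

Lemma homomorph_quotient (gT : finGroupType) (G N : {group gT}) :
  hH G -> N <| G -> hH (G / N)%G.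
Proof. by move=> hG /normal_norm nNG; apply: homomorph_morphim. Qed.

Lemma homomorph_isog (gT rT : finGroupType) (G : {group gT}) (H : {group rT}) :
  hH G -> G \isog H -> hH H.
Proof.
move=> hG /isogP [f _ defH]; have := hom f hG.
by have -> : (f @* G)%G = H by apply: val_inj.
Qed.

Lemma KHsubnormal_sub (gT : finGroupType) (G H : {group gT}) :
  KHsubnormal hH G H -> H \subset G.
Proof. by elim=> // K L sKL _ _; apply: subset_trans. Qed.

Lemma KHsubnormal_normal (gT : finGroupType) (G H : {group gT}) :
  H <| G -> KHsubnormal hH G H.
Proof. by move=> nsHG; apply: KHsn_step (normal_sub nsHG) _ (KHsn_refl _ _); left. Qed.

Lemma KHsubnormal_class (gT : finGroupType) (G H : {group gT}) :
  hH G -> H \subset G -> KHsubnormal hH G H.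
Proof.
move=> hG sHG; apply: KHsn_step (sHG) _ (KHsn_refl _ _); right.
exact: homomorph_quotient (gcore_normal sHG).
Qed.

(* Along a chain from a maximal non-normal subgroup, the first step leaving it must be the
   second kind of step, straight up to G. *)
Lemma KHsubnormal_maximal_quotient (gT : finGroupType) (G H : {group gT}) :
    (forall K : {group gT}, H \subset K -> K \subset G -> K :=: H \/ K :=: G) ->
    ~~ (H <| G) -> KHsubnormal hH G H -> hH (G / gcore H G)%G.
Proof.
move=> maxH not_nsHG KH_H.
suff chain_from_H : forall L : {group gT},
    KHsubnormal hH G L -> L = H -> hH (G / gcore H G)%G.
  exact: chain_from_H KH_H erefl.
move=> L; elim=> [|H1 K1 sHK1 step KH_K1 IH] eqH.
  by move: not_nsHG; rewrite -eqH normal_refl.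
subst H1; have [eqK|eqK] := maxH K1 sHK1 (KHsubnormal_sub KH_K1).
  by apply: IH; apply: val_inj.
have {}eqK : K1 = G by apply: val_inj.
by subst K1; case: step => // nsHG; rewrite nsHG in not_nsHG.
Qed.

End ClassClosure.

Section ComplementMaximal.

Variables (gT : finGroupType) (W T G : {group gT}).
Hypothesis defG : W ><| T = G.

Lemma gcore_sdprod_cent : gcore T G \subset 'C_T(W).
Proof.
have [nsWG sTG _ _ tiWT] := sdprod_context defG.
set N := gcore T G; have sNT : N \subset T := gcore_sub _ _.
have nNG : G \subset 'N(N) := normal_norm (gcore_normal sTG).
rewrite subsetI sNT; apply/commG1P/trivgP; rewrite -tiWT setIC.
apply: subset_trans (setSI _ sNT); apply: commg_subI.
  by rewrite subsetI subxx (subset_trans (subset_trans sNT sTG)) ?normal_norm.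
by rewrite subsetI subxx (subset_trans (normal_sub nsWG)).
Qed.

Hypothesis simpleW :
  forall B : {group gT}, B \subset W -> T \subset 'N(B) -> B :=: 1 \/ B :=: W.

Lemma sdprod_complement_maximal (K : {group gT}) :
  T \subset K -> K \subset G -> K :=: T \/ K :=: G.
Proof.
move=> sTK sKG; have [_ _ defWT _ _] := sdprod_context defG.
have defK : (K :&: W) * T = K by rewrite group_modr // defWT; apply/setIidPl.
have nKW_T : T \subset 'N(K :&: W).
  by rewrite normsI ?(subset_trans sTK (normG _)) //; case/sdprodP: defG.
case: (simpleW (subsetIr K W) nKW_T) => /= eqKW; rewrite -defK eqKW; first by left; rewrite mul1g.
by right; rewrite defWT.
Qed.

End ComplementMaximal.

Lemma class_of_KHsubnormal_complement (hH : group_class) (gT : finGroupType)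
    (W T G : {group gT}) :
    homomorph hH -> W ><| T = G ->
    (forall B : {group gT}, B \subset W -> T \subset 'N(B) -> B :=: 1 \/ B :=: W) ->
    'C_T(W) = 1 -> T :!=: 1 -> KHsubnormal hH G T -> hH gT G.
Proof.
move=> hom defG simpleW cTW ntT KH_T.
have core1 : gcore T G = 1 by apply/trivgP; rewrite -cTW gcore_sdprod_cent.
have not_nsTG : ~~ (T <| G).
  apply: contra ntT => /andP [sTG nTG].
  by rewrite -subG1 -core1 gcore_max.
have := KHsubnormal_maximal_quotient (sdprod_complement_maximal defG simpleW) not_nsTG KH_T.
by rewrite core1 => /homomorph_isog; apply; rewrite // isog_sym quotient1_isog.
Qed.

Definition indecomposable (gT : finGroupType) (C A : {set gT}) :=
  forall B1 B2 : {group gT}, B1 \x B2 = A ->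
    C \subset 'N(B1) -> C \subset 'N(B2) -> B1 :==: 1 \/ B2 :==: 1.

(* Maschke via Gaschutz: a C-invariant subgroup has a C-invariant complement. *)
Lemma indecomposable_irreducible (gT : finGroupType) (E A C B : {group gT}) (p : nat) :
    prime p -> A ><| C = E -> abelian A -> exponent A = p -> coprime p #|C| ->
    indecomposable C A ->
  B \subset A -> C \subset 'N(B) -> B :!=: 1 -> B :=: A.
Proof.
move=> pp defE abA expA coC indecA sBA nBC ntB.
have [nsAE sCE defAC nAC tiAC] := sdprod_context defE.
have sAE := normal_sub nsAE.
have nBE : E \subset 'N(B) by rewrite -defAC mul_subG // sub_abelian_norm.
have nsBE : B <| E by rewrite /normal (subset_trans sBA sAE) nBE.
have pA : p.-group A by rewrite -pnat_exponent expA pnat_id.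
have abelA : p.-abelem A by rewrite abelemE // abA expA dvdnn.
have coB : coprime #|B| #|E : A|.
  rewrite -(index_sdprod defE); apply: pnat_coprime (pgroupS sBA pA) _.
  by rewrite p'natE // -prime_coprime.
have := Gaschutz_split nsBE sBA sAE (abelianS sBA abA) coB.
rewrite (abelem_splits abelA sBA) => /splitsP [K /complP [tiBK defBK]].
have sKE : K \subset E by rewrite -defBK mulG_subr.
have defA : B * (K :&: A) = A by rewrite group_modl // defBK; apply/setIidPr.
have tiBKA : B :&: (K :&: A) = 1.
  by apply/trivgP; rewrite -tiBK setIS // subsetIl.
have dprodA : B \x (K :&: A) = A.
  by rewrite dprodE // (subset_trans (subsetIr _ _)) // (centSS _ sBA abA).
have nKAE : E \subset 'N(K :&: A).
  rewrite -defBK mul_subG //; last by rewrite normsI // (subset_trans sKE) ?normal_norm.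
  by rewrite (subset_trans sBA) // sub_abelian_norm // subsetIr.
case: (indecA _ _ dprodA nBC (subset_trans sCE nKAE)) => /eqP eq1.
  by rewrite eq1 eqxx in ntB.
by rewrite -defA eq1 mulg1.
Qed.

Lemma cyclic_pgroup_prime_order_sub (gT : finGroupType) (q : nat) (T K : {group gT}) (y : gT) :
    prime q -> cyclic T -> q.-group T -> y \in T -> #[y] = q ->
  K \subset T -> K :!=: 1 -> y \in K.
Proof.
move=> pq cycT qT Ty oy sKT ntK.
have [_ qK _] := pgroup_pdiv (pgroupS sKT qT) ntK.
have [x Kx ox] := Cauchy pq qK.
have eq_xy : <[x]> = <[y]> :> {set gT}.
  apply/eqP; rewrite (eq_subG_cyclic cycT) ?cycle_subG ?Ty ?(subsetP sKT x Kx) //.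
  by rewrite -!orderE ox oy.
by rewrite -cycle_subG -eq_xy cycle_subG.
Qed.

Section TwistedShift.

Variables (rT : finGroupType) (m : nat).
Hypothesis m_gt0 : 0 < m.
Implicit Types (s t : {perm 'I_m * rT}) (a z : rT) (A : {group rT}).

(* The base group rT^m is modelled by the permutations of 'I_m * rT acting as right
   multiplication in every coordinate; shift z moves coordinate i to i + 1 and multiplies by z
   on wrapping around, so that shift z ^+ m = diag z. *)
Definition coord (i : 'I_m) s : rT := (s (i, 1)).2.

Definition base : {set {perm 'I_m * rT}} :=
  [set s : {perm 'I_m * rT} | [forall x : 'I_m * rT, s x == (x.1, x.2 * coord x.1 s)]].

Lemma baseP s : reflect (forall i g, s (i, g) = (i, g * coord i s)) (s \in base).
Proof.
rewrite inE; apply: (iffP forallP) => [eq_s i g | eq_s [i g]]; apply/eqP.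
  exact: (eq_s (i, g)).
exact: eq_s.
Qed.

Lemma coord1 i : coord i 1 = 1.
Proof. by rewrite /coord perm1. Qed.

Lemma coordM i s t : s \in base -> t \in base -> coord i (s * t) = coord i s * coord i t.
Proof. by move=> /baseP bs /baseP bt; rewrite /coord permM bs mul1g bt. Qed.

Lemma base_group_set : group_set base.
Proof.
apply/group_setP; split; first by apply/baseP => i g; rewrite coord1 perm1 mulg1.
move=> s t bs bt; apply/baseP => i g.
by rewrite coordM // permM (baseP _ bs) (baseP _ bt) mulgA.
Qed.

Canonical base_group := group base_group_set.

Lemma base_inj s t : s \in base -> t \in base -> (forall i, coord i s = coord i t) -> s = t.
Proof. by move=> /baseP bs /baseP bt eq_st; apply/permP => -[i g]; rewrite bs bt eq_st. Qed.

Lemma coord_morphM i : {in base &, {morph coord i : s t / s * t}}.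
Proof. by move=> s t bs bt; rewrite coordM. Qed.

Canonical coord_morphism i := Morphism (coord_morphM i).

Lemma nontrivial_coord s : s \in base -> s != 1 -> exists i, coord i s != 1.
Proof.
move=> bs nts; apply/existsP; apply: contraR nts; rewrite negb_exists => /forallP c1.
by apply/eqP/base_inj => // i; rewrite coord1; apply/eqP/negPn/c1.
Qed.

Definition diag_fun a (x : 'I_m * rT) := (x.1, x.2 * a).

Lemma diag_fun_inj a : injective (diag_fun a).
Proof. by move=> [i g] [j h] [-> /mulIg ->]. Qed.

Definition diag a : {perm 'I_m * rT} := perm (@diag_fun_inj a).

Lemma diag_base a : diag a \in base.
Proof. by apply/baseP => i g; rewrite /coord !permE /diag_fun /= mul1g. Qed.

Lemma coord_diag i a : coord i (diag a) = a.
Proof. by rewrite /coord permE /diag_fun /= mul1g. Qed.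

Lemma diag1 : diag 1 = 1.
Proof. by apply: base_inj; rewrite ?diag_base ?group1 // => i; rewrite coord_diag coord1. Qed.

Lemma diagX a n : diag (a ^+ n) = diag a ^+ n.
Proof.
apply: base_inj; rewrite ?diag_base ?groupX ?diag_base // => i.
by rewrite coord_diag morphX ?diag_base //= coord_diag.
Qed.

Lemma order_diag a : #[diag a] = #[a].
Proof.
apply/eqP; rewrite eqn_dvd !order_dvdn -diagX expg_order diag1 eqxx /=.
by rewrite -(coord_diag (Ordinal m_gt0) (a ^+ _)) diagX expg_order coord1.
Qed.

Definition shift_fun z (x : 'I_m * rT) :=
  (ordS x.1, if x.1.+1 == m then x.2 * z else x.2).

Lemma shift_fun_inj z : injective (shift_fun z).
Proof.
move=> [i g] [j h] eq_ij; have /= /ordS_inj eq_i := f_equal fst eq_ij; subst j.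
by have /= := f_equal snd eq_ij; case: ifP => _ => [/mulIg|] ->.
Qed.

Definition shift z : {perm 'I_m * rT} := perm (@shift_fun_inj z).

Lemma shiftX z (x : 'I_m * rT) n :
  ((shift z ^+ n) x).1 = (x.1 + n) %% m :> nat /\
  ((shift z ^+ n) x).2 = x.2 * z ^+ ((x.1 + n) %/ m).
Proof.
case: x => i g /=.
elim: n => [|n [IH1 IH2]].
  by rewrite expg0 perm1 /= addn0 modn_small ?divn_small ?expg0 ?mulg1.
rewrite expgSr permM permE /shift_fun /=.
set y := (shift z ^+ n) (i, g) in IH1 IH2 *.
have wrap : (y.1.+1 == m) = (m %| (i + n).+1).
  have -> : (i + n).+1 = (i + n) %/ m * m + ((i + n) %% m).+1.
    by rewrite addnS -divn_eq.
  rewrite IH1 dvdn_addr ?dvdn_mull //; apply/eqP/idP => [->|dv] //.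
  by apply/eqP; rewrite eqn_leq (dvdn_leq _ dv) // andbT ltn_pmod.
split; first by rewrite IH1 addnS -addn1 modnDml addn1.
rewrite addnS (divnS _ m_gt0) -wrap IH2.
by case: ifP => _; rewrite /= ?add0n // add1n expgSr mulgA.
Qed.

Lemma shift_expm z : shift z ^+ m = diag z.
Proof.
apply/permP => -[i g].
have [] := shiftX z (i, g) m; case: ((shift z ^+ m) (i, g)) => j h /= eq_j ->.
rewrite modnDr modn_small // in eq_j; have -> : j = i by apply: val_inj.
by rewrite permE /diag_fun divnDr // divn_small // divnn m_gt0 expg1.
Qed.

Lemma shiftXm z j : shift z ^+ (m * j) = diag (z ^+ j).
Proof. by rewrite expgM shift_expm diagX. Qed.

Lemma dvdn_shiftX_base z n : shift z ^+ n \in base -> m %| n.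
Proof.
move=> /baseP bn; have [] := shiftX z (Ordinal m_gt0, 1) n.
rewrite bn /= add0n => eq0 _.
by apply/dvdnP; exists (n %/ m); rewrite {1}(divn_eq n m) -eq0 addn0.
Qed.

Lemma order_shift z : #[shift z] = (m * #[z])%N.
Proof.
have id_n := expg_order (shift z).
apply/eqP; rewrite eqn_dvd; apply/andP; split.
  by rewrite order_dvdn shiftXm expg_order diag1.
have /dvdnP [j def_n] : m %| #[shift z] by apply: (dvdn_shiftX_base (z := z)); rewrite id_n group1.
rewrite def_n [(j * m)%N]mulnC dvdn_pmul2l // order_dvdn.
by rewrite -(coord_diag (Ordinal m_gt0) (z ^+ j)) -shiftXm mulnC -def_n id_n coord1.
Qed.

Lemma base_cycle_shift z s : s \in base -> s \in <[shift z]> -> exists j, s = diag (z ^+ j).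
Proof.
move=> bs /cycleP [n def_s]; subst s.
by have /dvdnP [j ->] := dvdn_shiftX_base bs; exists j; rewrite mulnC shiftXm.
Qed.

Lemma shiftJ z s i g : s \in base ->
  (s ^ shift z) (i, g) =
  (i, g * (if (ord_pred i).+1 == m then coord (ord_pred i) s ^ z else coord (ord_pred i) s)).
Proof.
move=> /baseP bs; set j := ord_pred i; have -> : i = ordS j by rewrite /j ord_predK.
set w := if j.+1 == m then z^-1 else 1.
have -> : (ordS j, g) = shift z (j, g * w).
  by rewrite permE /shift_fun /= /w; case: (j.+1 == m); rewrite ?mulg1 // mulgKV.
rewrite conjgE !permM permK bs permE /shift_fun /= /w.
by case: (j.+1 == m); rewrite ?mul1g ?mulg1 // /conjg !mulgA.
Qed.

Definition base_in A : {set {perm 'I_m * rT}} := [set s in base | [forall i, coord i s \in A]].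

Lemma base_inP A s : reflect (s \in base /\ forall i, coord i s \in A) (s \in base_in A).
Proof. by apply: (iffP setIdP) => -[bs /forallP]. Qed.

Lemma base_in_group_set A : group_set (base_in A).
Proof.
apply/group_setP; split; first by apply/base_inP; split=> [|i]; rewrite ?group1 ?coord1.
move=> s t /base_inP [bs As] /base_inP [bt At].
by apply/base_inP; split=> [|i]; rewrite ?groupM // coordM ?groupM.
Qed.

Canonical base_in_group A := group (base_in_group_set A).

Lemma base_in_sub A : base_in A \subset base.
Proof. by apply/subsetP => s /base_inP []. Qed.

Lemma diag_base_in A a : a \in A -> diag a \in base_in A.
Proof. by move=> Aa; apply/base_inP; split=> [|i]; rewrite ?diag_base ?coord_diag. Qed.

Lemma base_in_nontrivial A : A :!=: 1 -> base_in A :!=: 1.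
Proof.
move=> ntA; have [a Aa nta] := trivgPn _ ntA.
apply/trivgPn; exists (diag a); first exact: diag_base_in.
by apply: contra nta => /eqP/(congr1 (coord (Ordinal m_gt0))); rewrite coord_diag coord1 => ->.
Qed.

Lemma shift_norm_base_in A z : z \in 'N(A) -> shift z \in 'N(base_in A).
Proof.
move=> nAz; apply/normP/eqP; rewrite eqEcard cardJg leqnn andbT.
apply/subsetP => _ /imsetP [s /base_inP [bs As] ->].
have coordJ i : coord i (s ^ shift z) \in A.
  by rewrite /coord shiftJ //= mul1g; case: ifP => _; rewrite ?memJ_norm ?As.
apply/base_inP; split=> //; apply/baseP => i g.
by rewrite shiftJ //; congr (_, _ * _); rewrite /coord shiftJ // mul1g.
Qed.

Lemma abelian_base_in A : abelian A -> abelian (base_in A).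
Proof.
move=> abA; apply/centsP => s /base_inP [bs As] t /base_inP [bt At].
apply: base_inj; rewrite ?groupM // => i.
by rewrite !coordM //; apply: (centsP abA).
Qed.

Lemma exponent_base_in A : exponent (base_in A) %| exponent A.
Proof.
apply/exponentP => s /base_inP [bs As].
apply: base_inj; rewrite ?groupX ?group1 // => i.
by rewrite coord1 morphX //= expg_exponent.
Qed.

Lemma diag_notin_cent A c (W : {group {perm 'I_m * rT}}) :
  W \subset base_in A -> W :!=: 1 -> 'C_A[c] = 1 -> diag c \notin 'C(W).
Proof.
move=> sWA ntW cAc; have [w Ww ntw] := trivgPn _ ntW.
have /base_inP [bw Aw] := subsetP sWA w Ww.
have [i ntwi] := nontrivial_coord bw ntw.
apply: contra ntwi => /centP/(_ w Ww) cw.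
suff: coord i w \in 'C_A[c] by rewrite cAc => /set1P ->.
by rewrite inE Aw; apply/cent1P; rewrite /commute -(coord_diag i c) -!coordM ?diag_base // cw.
Qed.

End TwistedShift.

Section InducedModule.

Variables (rT : finGroupType) (p q m : nat) (E A : {group rT}) (z : rT).
Hypotheses (pp : prime p) (pq : prime q) (m_gt0 : 0 < m).
Hypotheses (defE : A ><| <[z]> = E) (abA : abelian A) (expA : exponent A = p).
Hypothesis cAz : 'C_<[z]>(A) = 1.
Hypothesis irrA :
  forall B : {group rT}, B \subset A -> <[z]> \subset 'N(B) -> B :!=: 1 -> B :=: A.

Local Notation tau := (shift m z).

Variable W : {group {perm 'I_m * rT}}.
Hypothesis minW : [min W of X | [&& X :!=: 1, X \subset base_in m A & tau \in 'N(X)]].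

Let ntW : W :!=: 1. Proof. by case/mingroupP: minW => /and3P []. Qed.
Let sWV : W \subset base_in m A. Proof. by case/mingroupP: minW => /and3P []. Qed.
Let nW_tau : tau \in 'N(W). Proof. by case/mingroupP: minW => /and3P []. Qed.

Lemma W_simple (B : {group {perm 'I_m * rT}}) :
  B \subset W -> <[tau]> \subset 'N(B) -> B :=: 1 \/ B :=: W.
Proof.
move=> sBW nBtau; have [->|ntB] := eqVneq (B : {set _}) 1; [by left | right].
have [_ minW'] := mingroupP minW; apply: minW' => //.
by rewrite ntB (subset_trans sBW sWV) -cycle_subG.
Qed.

Lemma sdprod_W_shift : W ><| <[tau]> = W <*> <[tau]>.
Proof.
apply: sdprodEY; first by rewrite cycle_subG.
apply/trivgP/subsetP => s /setIP [Ws tau_s]; rewrite inE.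
have /base_inP [bs As] := subsetP sWV s Ws.
have [j def_s] := base_cycle_shift m_gt0 bs tau_s.
have [_ _ _ _ /= tiAz] := sdprod_context defE.
have : z ^+ j \in A :&: <[z]>.
  by rewrite inE mem_cycle andbT -(coord_diag (Ordinal m_gt0) (z ^+ j)) -def_s As.
by rewrite tiAz => /set1P zj1; rewrite def_s zj1 diag1.
Qed.

Lemma cent1_trivial c : c \in <[z]> -> c != 1 -> 'C_A[c] = 1.
Proof.
move=> zc ntc; apply/eqP; apply: contraR ntc => ntB.
have nBz : <[z]> \subset 'N('C_A[c]).
  have [_ _ _ nAz _] := sdprod_context defE.
  rewrite normsI // (subset_trans _ (normG _)) // sub_cent1.
  exact: subsetP (cycle_abelian z) c zc.
have eqB := irrA (subsetIl A 'C[c]) nBz ntB.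
have : c \in 'C_<[z]>(A) by rewrite inE zc -sub_cent1 -eqB subsetIr.
by rewrite cAz => /set1P ->.
Qed.

(* Every nontrivial subgroup of the cyclic q-group <[tau]> contains the diagonal element of
   order q, which centralises no nontrivial element of A. *)
Lemma cent_shift_W : q.-nat m -> q.-elt z -> z != 1 -> 'C_<[tau]>(W) = 1.
Proof.
move=> qm qz ntz.
have ntZ : <[z]>%G :!=: 1 by rewrite cycle_eq1.
have [_ q_dv_z _] := pgroup_pdiv qz ntZ.
have [c zc oc] := Cauchy pq q_dv_z.
have ntc : c != 1 by rewrite -order_gt1 oc prime_gt1.
have tau_c : diag m c \in <[tau]>.
  by have /cycleP [j ->] := zc; rewrite -shiftXm // mem_cycle.
have q_tau : q.-group <[tau]> by rewrite /pgroup -orderE order_shift // pnatM qm.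
have := diag_notin_cent sWV ntW (cent1_trivial zc ntc).
apply: contraNeq => ntK; apply: subsetP (subsetIr <[tau]> 'C(W)) _ _.
by apply: cyclic_pgroup_prime_order_sub pq (cycle_cyclic tau) q_tau tau_c _ (subsetIl _ _) ntK;
  rewrite order_diag.
Qed.

Lemma is_E_W_shift :
  q.-nat m -> q.-elt z -> z != 1 -> is_E (W <*> <[tau]>)%G (m * #[z]) p.
Proof.
move=> qm qz ntz; exists W, <[tau]>%G.
have [nsWG _ _ _ _] := sdprod_context sdprod_W_shift.
split; split=> //; first exact: sdprod_W_shift.
- exact: abelianS sWV (abelian_base_in m abA).
- have : exponent W %| p by rewrite -expA (dvdn_trans (exponentS sWV)) ?exponent_base_in.
  case/primeP: pp => _ /[apply] /orP [/eqP eW1|/eqP //].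
  by move: ntW; rewrite trivg_exponent eW1 dvdnn.
- exact: cycle_cyclic.
- by rewrite /= -orderE order_shift.
- exact: cent_shift_W.
move=> B1 B2 dprodW nB1 nB2; have [_ defW _ tiB] := dprodP dprodW.
have sB1W : B1 \subset W by rewrite -defW mulG_subl.
case: (W_simple sB1W nB1) => eqB1; [left | right]; apply/eqP => //.
by apply/trivgP; rewrite -tiB eqB1 subsetI -{1}defW mulG_subr subxx.
Qed.

Lemma coord_morphim_join : exists i, coord i @* (W <*> <[tau ^+ m]>) = E.
Proof.
have [w Ww ntw] := trivgPn _ ntW.
have /base_inP [bw Aw] := subsetP sWV w Ww.
have [i ntwi] := nontrivial_coord bw ntw; exists i.
have sWb : W \subset base rT m := subset_trans sWV (base_in_sub m A).
have b_taum : tau ^+ m \in base rT m by rewrite shift_expm // diag_base.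
have nW_taum : <[tau ^+ m]> \subset 'N(W) by rewrite cycle_subG groupX.
have sWiA : coord i @* W \subset A.
  apply/subsetP => _ /morphimP [s _ Ws ->].
  by have /base_inP [_ ->] := subsetP sWV s Ws.
have nWiz : <[z]> \subset 'N(coord i @* W).
  rewrite cycle_subG; apply/normP.
  by rewrite -{1}(coord_diag i z) -shift_expm // -morphimJ ?(normP (groupX m nW_tau)).
have ntWi : coord i @* W != 1.
  by apply/trivgPn; exists (coord i w); rewrite ?mem_morphim.
have coordW : coord i @* W = A := irrA sWiA nWiz ntWi.
rewrite norm_joinEr // morphimMl // morphim_cycle // coordW /= shift_expm // coord_diag.
by have [_ _ /= ->] := sdprod_context defE.
Qed.

Lemma class_E_of_class_W_shift (hH : group_class) :
  homomorph hH -> hereditary hH -> hH _ (W <*> <[tau]>)%G -> hH rT E.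
Proof.
move=> hom her hG; have [i coord_onto] := coord_morphim_join.
have -> : E = (coord i @* (W <*> <[tau ^+ m]>))%G by apply: val_inj.
have sSG : W <*> <[tau ^+ m]> \subset W <*> <[tau]>.
  by rewrite join_subG joing_subl cycle_subG groupX // -cycle_subG joing_subr.
have sSb : W <*> <[tau ^+ m]> \subset base rT m.
  by rewrite join_subG (subset_trans sWV) ?base_in_sub // cycle_subG shift_expm ?diag_base.
by apply: (homomorph_morphim hom (coord_morphism _ i)) => //; apply: her hG sSG.
Qed.

End InducedModule.

Lemma is_E_class (hH : group_class) (p q k t : nat) (rT : finGroupType) (E : {group rT}) :
    homomorph hH -> hereditary hH -> prime p -> prime q -> p != q -> 0 < t -> t <= k ->
    (forall (gT : finGroupType) (G : {group gT}), is_E G (q ^ k) p -> vstar hH gT G) ->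
  is_E E (q ^ t) p -> hH rT E.
Proof.
move=> hom her pp pq npq t_gt0 tk vstarE [A [C [[defE _ abA expA] [cycC oC cCA ntA indecA]]]].
have [z defC] := cyclicP cycC; rewrite defC in defE oC cCA indecA.
have oz : #[z] = (q ^ t)%N by rewrite orderE.
have coC : coprime p #|<[z]>| by rewrite oC coprime_pexpr // prime_coprime // dvdn_prime2.
have irrA := indecomposable_irreducible pp defE abA expA coC indecA.
pose m := (q ^ (k - t))%N; have m_gt0 : 0 < m by rewrite expn_gt0 prime_gt0.
have qm : q.-nat m by rewrite pnatX pnat_id.
have qz : q.-elt z by rewrite /p_elt oz pnatX pnat_id.
have ntz : z != 1.
  by rewrite -[z != 1]order_gt1 oz; have := ltn_exp2l 0 t (prime_gt1 pq); rewrite expn0 t_gt0.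
have ntV := base_in_nontrivial m_gt0 ntA.
have [_ _ _ nAz _] := sdprod_context defE; rewrite /= cycle_subG in nAz.
have [W minW _] := mingroup_exists
  (gP := fun X => [&& X :!=: 1, X \subset base_in m A & shift m z \in 'N(X)])
  (G := base_in_group m A) (introT and3P (And3 ntV (subxx _) (shift_norm_base_in m nAz))).
set G := (W <*> <[shift m z]>)%G.
have G_E : is_E G (q ^ k) p.
  rewrite -(subnK tk) expnD -oz.
  exact: (is_E_W_shift pp pq m_gt0 defE abA expA cCA irrA minW qm qz ntz).
have tau_q : q.-elt (shift m z) by rewrite /p_elt order_shift // pnatM qm.
have tau_G : shift m z \in G by rewrite -cycle_subG joing_subr.
have KH_tau := vstarE _ G G_E q _ pq tau_G tau_q.
have ntT : <[shift m z]> :!=: 1.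
  rewrite cycle_eq1 -[_ != 1]order_gt1 order_shift //.
  by rewrite (leq_trans _ (leq_pmull _ m_gt0)) ?order_gt1.
have hG := class_of_KHsubnormal_complement hom (sdprod_W_shift m_gt0 defE minW)
  (W_simple minW) (cent_shift_W pq m_gt0 defE cCA irrA minW qm qz ntz) ntT KH_tau.
exact: (class_E_of_class_W_shift m_gt0 defE irrA minW hom her hG).
Qed.

Lemma is_E1_abelian (gT : finGroupType) (E : {group gT}) (p : nat) : is_E E 1 p -> abelian E.
Proof.
case=> A [C [[defE _ abA _] [_ oC _ _ _]]].
have C1 : C :=: 1 by apply/eqP; rewrite trivg_card1 oC.
by case/sdprodP: defE => _; rewrite C1 mulg1 => <-.
Qed.

Theorem mainTheorem3 (hH : group_class) (p q k : nat) :
  homomorph hH -> hereditary hH ->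
  prime p -> prime q -> p != q -> 1 <= k ->
  (forall (gT : finGroupType) (G : {group gT}),
      is_E G (q ^ k) p -> vstar hH gT G) ->
  forall t : nat, t <= k ->
  forall (rT : finGroupType) (E : {group rT}),
    is_E E (q ^ t) p -> vstar hH rT E.
Proof.
move=> hom her pp pq npq _ vstarE t tk rT E E_E r x _ Ex _.
have sxE : <[x]> \subset E by rewrite cycle_subG.
have [t0 | t_gt0] := posnP t.
  apply: KHsubnormal_normal; rewrite -sub_abelian_normal //.
  by apply: (is_E1_abelian (p := p)); rewrite -(expn0 q) -t0.
apply: (KHsubnormal_class hom) sxE.
exact: (is_E_class hom her pp pq npq t_gt0 tk vstarE E_E).
Qed.
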